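(* Assume the standing setting and the type II decomposition for a type II edge $e=uw$. Then $U_1\neq\emptyset$, $W_2\neq\emptyset$, $|U_1|\ge|W_1|$ and $|W_2|\ge|U_2|$.
   Context: Graphs may have multiple edges but no loops. An edge is admissible if it lies in some perfect matching; a connected graph with at least two vertices is matching covered if every edge is admissible; an edge $e$ of a matching covered graph $G$ is removable if $G-e$ is matching covered, and nonremovable otherwise. A brick is a 3-connected nonbipartite graph $G$ such that $G-x-y$ has a perfect matching for all distinct $x,y$. A nonbipartite matching covered graph $G$ is near-bipartite if it has a pair of edges $\{e_1,e_2\}$ (a removable doubleton) such that $G-\{e_1,e_2\}$ is bipartite matching covered. For a graph with a perfect matching, a nonempty vertex set $S$ is a barrier if the number of odd components of $G-S$ equals $|S|$. Standing setting: $G$ is a near-bipartite brick with removable doubleton $\{e_1,e_2\}$, $H=G-\{e_1,e_2\}$, and $(U,W)$ is the bipartition of $H$, labelled so that both ends of $e_1$ lie in $U$ and both ends of $e_2$ lie in $W$. A nonremovable edge $e\notin\{e_1,e_2\}$ of $G$ is of type II if $e$ is nonremovable in $H$. Type II decomposition: let $e=uw$ be of type II with $u\in U$, $w\in W$. There is an edge $e^*$ of $G-e$ that is nonadmissible both in $G-e$ and in $H-e$; fix such $e^*$ and an inclusion-maximal barrier $B$ of $G-e$ containing both ends of $e^*$. Let $U_1=B\cap U$, $W_2=B\cap W$, and let $U_2$ (resp. $W_1$) be the set of vertices of $U$ (resp. $W$) that form single-vertex components of $G-e-B$. *)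

From mathcomp Require Import all_boot.
Set Implicit Arguments. Unset Strict Implicit. Unset Printing Implicit Defensive.

(* Loopless multigraphs: a finite vertex type V, a finite edge type E and an
   endpoint map g : E -> V * V (looplessness is a hypothesis of the theorem).
   A (sub)graph is described by a vertex set X and an edge set F; only the
   edges of F with both ends in X count as edges of the graph (X, F). *)
Section Graphs.
Variables (V E : finType) (g : E -> V * V).

Definition inc (x : V) (f : E) : bool := ((g f).1 == x) || ((g f).2 == x).

Definition edges (X : {set V}) (F : {set E}) : {set E} :=
  [set f in F | ((g f).1 \in X) && ((g f).2 \in X)].

Definition adj (X : {set V}) (F : {set E}) : rel V :=
  fun x y => [exists f in edges X F,
    (((g f).1 == x) && ((g f).2 == y)) || (((g f).1 == y) && ((g f).2 == x))].

Definition connected (X : {set V}) (F : {set E}) : bool :=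
  (X != set0) && [forall x in X, forall y in X, connect (adj X F) x y].

Definition perfect_matching (X : {set V}) (F : {set E}) (M : {set E}) : bool :=
  (M \subset edges X F) && [forall x in X, #|[set f in M | inc x f]| == 1].

Definition has_pm (X : {set V}) (F : {set E}) : Prop :=
  exists M, perfect_matching X F M.

Definition admissible (X : {set V}) (F : {set E}) (f : E) : Prop :=
  exists M, perfect_matching X F M /\ f \in M.

Definition matching_covered (X : {set V}) (F : {set E}) : Prop :=
  [/\ connected X F, 1 < #|X| &
      forall f, f \in edges X F -> admissible X F f].

Definition removable (X : {set V}) (F : {set E}) (f : E) : Prop :=
  matching_covered X (F :\ f).

Definition bipartition (X : {set V}) (F : {set E}) (U W : {set V}) : bool :=
  [&& U :&: W == set0, U :|: W == X &
      [forall f in edges X F,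
        (((g f).1 \in U) && ((g f).2 \in W)) ||
        (((g f).1 \in W) && ((g f).2 \in U))]].

Definition bipartite (X : {set V}) (F : {set E}) : Prop :=
  exists U W, bipartition X F U W.

Definition three_connected (X : {set V}) (F : {set E}) : Prop :=
  3 < #|X| /\ forall S : {set V}, S \subset X -> #|S| <= 2 ->
    connected (X :\: S) F.

Definition bicritical (X : {set V}) (F : {set E}) : Prop :=
  forall x y, x \in X -> y \in X -> x != y -> has_pm (X :\: [set x; y]) F.

Definition brick (X : {set V}) (F : {set E}) : Prop :=
  [/\ three_connected X F, ~ bipartite X F & bicritical X F].

Definition near_bipartite (X : {set V}) (F : {set E}) (e1 e2 : E) : Prop :=
  [/\ matching_covered X F, ~ bipartite X F,
      [/\ e1 \in edges X F, e2 \in edges X F & e1 != e2],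
      matching_covered X (F :\ e1 :\ e2) & bipartite X (F :\ e1 :\ e2)].

Definition components (X : {set V}) (F : {set E}) : {set {set V}} :=
  [set [set y in X | connect (adj X F) x y] | x in X].

Definition odd_components (X : {set V}) (F : {set E}) : nat :=
  #|[set C in components X F | odd #|C|]|.

Definition barrier (X : {set V}) (F : {set E}) (S : {set V}) : Prop :=
  [/\ has_pm X F, S != set0, S \subset X & odd_components (X :\: S) F = #|S|].

End Graphs.

From mathcomp Require Import all_boot.
Set Implicit Arguments. Unset Strict Implicit. Unset Printing Implicit Defensive.

(* A vertex of U outside B that is a single-vertex component of G - e - B has
   its whole neighbourhood in B, so a perfect matching of H avoiding e sends it
   into B :&: W, injectively; symmetrically for W.  Such a matching exists
   because an end x of e has, by 3-connectivity, an edge f other than e, e1, e2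
   (at most one of e1, e2 meets x, as they lie on opposite sides), and f is
   admissible in the matching covered graph H.  Finally e* is an edge of H with
   both ends in B, so B meets both U and W. *)

Section Loopless.
Variables (V E : finType) (g : E -> V * V).
Hypothesis noloop : forall f : E, (g f).1 != (g f).2.

Definition other_end (f : E) (x : V) : V :=
  if (g f).1 == x then (g f).2 else (g f).1.

Lemma inc_other_end f x : inc g (other_end f x) f.
Proof. by rewrite /inc /other_end; case: ifP; rewrite eqxx ?orbT. Qed.

Lemma other_end_neq f x : other_end f x != x.
Proof.
rewrite /other_end; have [<-|//] := eqVneq (g f).1 x.
by rewrite eq_sym noloop.
Qed.

Lemma other_endK f x : inc g x f -> other_end f (other_end f x) = x.
Proof.
rewrite /inc /other_end; have [<- _|_ /= /eqP <-] := eqVneq (g f).1 x.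
  by rewrite (negPf (noloop f)).
by rewrite eqxx.
Qed.

Lemma inc_in_ends f x (A : {set V}) :
  inc g x f -> (g f).1 \in A -> (g f).2 \in A -> x \in A.
Proof. by case/orP => /eqP <-. Qed.

Lemma edges_other_end (X : {set V}) (F : {set E}) f x :
  f \in edges g X F -> other_end f x \in X.
Proof. by rewrite inE /other_end => /and3P [_ h1 h2]; case: ifP. Qed.

Lemma edges_inc (X : {set V}) (F : {set E}) f x :
  f \in F -> inc g x f -> x \in X -> other_end f x \in X -> f \in edges g X F.
Proof.
rewrite inE /other_end => -> /orP [] /eqP <- ->.
  by rewrite eqxx.
by rewrite (negPf (noloop f)) andbT.
Qed.

Lemma edge_adj (X : {set V}) (F : {set E}) f x :
  f \in edges g X F -> inc g x f -> adj g X F x (other_end f x).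
Proof.
move=> fX; rewrite /inc /other_end => xf; apply/existsP; exists f.
by rewrite fX /=; case: eqP xf => [-> _|_ /= ->]; rewrite !eqxx ?orbT.
Qed.

Lemma adjP (X : {set V}) (F : {set E}) x z : adj g X F x z ->
  exists f, [/\ f \in edges g X F, inc g x f & other_end f x = z].
Proof.
case/existsP => f /andP [fX /orP [] /andP [/eqP f1 /eqP f2]]; exists f.
  by rewrite fX /inc /other_end f1 f2 !eqxx.
have zx : z != x by rewrite -f1 -f2 noloop.
by rewrite fX /inc /other_end f1 f2 eqxx orbT (negPf zx).
Qed.

Lemma edgesS (X Y : {set V}) (F : {set E}) :
  X \subset Y -> edges g X F \subset edges g Y F.
Proof.
move=> /subsetP XY; apply/subsetP => f.
by rewrite !inE => /and3P [-> /XY -> /XY ->].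
Qed.

Lemma three_connected_edge_avoiding (X : {set V}) (F : {set E}) x y1 y2 :
  three_connected g X F -> x \in X ->
  exists f,
    [/\ f \in edges g X F, inc g x f & other_end f x \notin [set y1; y2]].
Proof.
move=> [X_gt3 conn] xX.
set S := ([set y1; y2] :\ x) :&: X.
have S_le2 : #|S| <= 2.
  have SY : S \subset [set y1; y2].
    exact: subset_trans (subsetIl _ _) (subsetDl _ _).
  by rewrite (leq_trans (subset_leq_card SY)) // cards2 ltnS leq_b1.
have [y yX yxS] : exists2 y, y \in X & y \notin x |: S.
  apply/subsetPn; apply: contraTN X_gt3 => /subset_leq_card XS.
  rewrite -leqNgt (leq_trans XS) // cardsU1; exact: leq_add (leq_b1 _) S_le2.
have xXS : x \in X :\: S by rewrite !inE eqxx xX.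
have yXS : y \in X :\: S by move: yxS; rewrite !inE negb_or yX => /andP [_ ->].
case/andP: (conn S (subsetIr _ _) S_le2) => _.
move=> /forallP/(_ x)/implyP/(_ xXS)/forallP/(_ y)/implyP/(_ yXS).
case/connectP => [[|z p]] /=; first by move=> _ yx; rewrite yx setU11 in yxS.
case/andP=> /adjP [f [fXS xf fz]] _ _; exists f; split=> //.
  exact: subsetP (edgesS _ (subsetDl _ _)) _ fXS.
have zXS : z \in X :\: S by rewrite -fz (edges_other_end _ fXS).
move: zXS; rewrite -fz !inE (negPf (other_end_neq f x)) /=.
by case/andP => /nandP [] // /negPf ->.
Qed.

Lemma singleton_component_edge (B : {set V}) (F : {set E}) v f :
  [set v] \in components g (~: B) F -> f \in F -> inc g v f ->
  other_end f v \in B.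
Proof.
case/imsetP => x0 _ Cv fF vf; apply/negPn/negP => oB.
have in_C y : (y \in [set v]) = (y \notin B) && connect (adj g (~: B) F) x0 y.
  by rewrite Cv !inE.
have /andP [vB x0v] : (v \notin B) && connect (adj g (~: B) F) x0 v.
  by rewrite -in_C set11.
have f_out : f \in edges g (~: B) F by apply: (edges_inc fF vf); rewrite inE.
have : other_end f v \in [set v].
  by rewrite in_C oB (connect_trans x0v) // connect1 // edge_adj.
by rewrite inE (negPf (other_end_neq f v)).
Qed.

Section PerfectMatching.
Variables (X : {set V}) (F M : {set E}).
Hypothesis pmM : perfect_matching g X F M.

Lemma pm_edge_at v : v \in X ->
  exists f,
    [/\ f \in M, inc g v f & forall f', f' \in M -> inc g v f' -> f' = f].
Proof.
move=> vX; case/andP: pmM => _ /forallP/(_ v)/implyP/(_ vX)/cards1P [f Mv].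
have Mv_eq f' : (f' \in M) && inc g v f' = (f' == f).
  by rewrite -in_set1 -Mv inE.
have /andP [fM vf] : (f \in M) && inc g v f by rewrite Mv_eq.
by exists f; split=> // f' f'M vf'; apply/eqP; rewrite -Mv_eq f'M.
Qed.

Lemma pm_edges f : f \in M -> f \in edges g X F.
Proof. by case/andP: pmM => /subsetP MX _; apply: MX. Qed.

Lemma pm_notin v f f' : v \in X -> f \in M -> inc g v f -> inc g v f' ->
  f' != f -> f' \notin M.
Proof.
move=> vX fM vf vf'; apply: contraNN => f'M.
have [f0 [_ _ uniq0]] := pm_edge_at vX.
by rewrite (uniq0 _ f'M vf') (uniq0 _ fM vf).
Qed.

Definition mate v := oapp (other_end^~ v) v [pick f in M | inc g v f].

Lemma mateP v : v \in X ->
  exists f, [/\ f \in M, inc g v f & mate v = other_end f v].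
Proof.
move=> vX; rewrite /mate; case: pickP => [f /andP [fM vf] | none].
  by exists f.
by have [f [fM vf _]] := pm_edge_at vX; move: (none f); rewrite fM vf.
Qed.

Lemma mate_inj : {in X &, injective mate}.
Proof.
move=> v1 v2 v1X v2X mate12.
have [f1 [f1M vf1 m1]] := mateP v1X.
have [f2 [f2M vf2 m2]] := mateP v2X.
have yX : mate v1 \in X by rewrite m1 (edges_other_end _ (pm_edges f1M)).
have [f [_ _ uniq]] := pm_edge_at yX.
have f1f : f1 = f by apply: uniq; rewrite // m1 inc_other_end.
have f2f : f2 = f by apply: uniq; rewrite // mate12 m2 inc_other_end.
by rewrite -(other_endK vf1) -(other_endK vf2) -m1 -m2 mate12 f1f f2f.
Qed.

End PerfectMatching.

Section Bipartition.
Variables (X : {set V}) (F : {set E}) (U W : {set V}).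
Hypothesis UW : bipartition g X F U W.

Lemma bipartition_sym : bipartition g X F W U.
Proof.
case/and3P: UW; rewrite /bipartition setIC setUC => -> -> /forallP side.
by apply/forallP => f; rewrite orbC; apply: side.
Qed.

Lemma bipartition_ends f : f \in edges g X F ->
  ((g f).1 \in U) && ((g f).2 \in W) || ((g f).1 \in W) && ((g f).2 \in U).
Proof. by case/and3P: UW => _ _ /forallP/(_ f)/implyP. Qed.

Lemma bipartition_other_end f v :
  f \in edges g X F -> v \in U -> inc g v f -> other_end f v \in W.
Proof.
case/and3P: UW => /eqP UW0 _ _ /bipartition_ends sides vU.
have vW : v \notin W.
  by apply/negP => vW; have := in_set0 v; rewrite -UW0 inE vU vW.
rewrite /other_end; case/orP=> /eqP fv; move: sides; rewrite fv ?eqxx.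
  by rewrite vU (negPf vW) /= orbF.
have := noloop f; rewrite fv => /negPf ->.
by rewrite vU (negPf vW) andbF andbT.
Qed.

Lemma bipartition_edge_meets (B : {set V}) f : f \in edges g X F ->
  (g f).1 \in B -> (g f).2 \in B -> (B :&: U != set0) && (B :&: W != set0).
Proof.
move=> /bipartition_ends /orP [] /andP [f1 f2] b1 b2; apply/andP; split;
  apply/set0Pn;
  by [exists (g f).1; rewrite inE b1 | exists (g f).2; rewrite inE b2].
Qed.

End Bipartition.

Lemma card_singleton_components_le (F F' M : {set E}) (U W B : {set V}) :
  perfect_matching g setT F M -> M \subset F' -> bipartition g setT F U W ->
  #|[set v in U | [set v] \in components g (~: B) F']| <= #|B :&: W|.
Proof.
move=> pmM MF' UW; set A := [set v in U | _].
have mate_injA : {in A &, injective (mate M)}.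
  by move=> v1 v2 _ _; apply: (mate_inj pmM); rewrite inE.
rewrite -(card_in_imset mate_injA); apply/subset_leq_card/subsetP => y.
case/imsetP => v; rewrite inE => /andP [vU vC] ->.
have [f [fM vf ->]] := mateP pmM (in_setT v).
rewrite inE (singleton_component_edge vC (subsetP MF' _ fM) vf).
exact: (bipartition_other_end UW (pm_edges pmM fM) vU vf).
Qed.

Lemma edge_avoiding_doubleton (X : {set V}) (F : {set E}) (U W : {set V})
    e1 e2 x y :
  three_connected g X F -> x \in X -> U :&: W = set0 ->
  (g e1).1 \in U -> (g e1).2 \in U -> (g e2).1 \in W -> (g e2).2 \in W ->
  exists f, [/\ f \in edges g X F, inc g x f, other_end f x != y
    & f \notin [set e1; e2]].
Proof.
move=> conn3 xX UW0 e1U1 e1U2 e2W1 e2W2.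
pose y' := if inc g x e1 then other_end e1 x else other_end e2 x.
have [f [fX xf]] := three_connected_edge_avoiding y y' conn3 xX.
rewrite !inE negb_or => /andP [fy fy']; exists f; split => //.
rewrite !inE negb_or; apply/andP; split; apply: contraNneq fy' => fe.
  by rewrite /y' -fe xf eqxx.
rewrite /y' -fe; case: ifPn => [xe1|_]; last by rewrite eqxx.
have xW : x \in W by apply: (inc_in_ends xf); rewrite fe.
have : x \in U :&: W by rewrite inE (inc_in_ends xe1 e1U1 e1U2).
by rewrite UW0 inE.
Qed.

End Loopless.

Theorem mainTheorem9 (V E : finType) (g : E -> V * V)
  (noloop : forall f : E, (g f).1 != (g f).2)
  (e1 e2 : E) (U W : {set V}) (e estar : E) (B : {set V}) :
  (* standing setting: G = (V, E) near-bipartite brick, H = G - {e1, e2} *)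
  brick g setT setT ->
  near_bipartite g setT setT e1 e2 ->
  bipartition g setT (setT :\ e1 :\ e2) U W ->
  (g e1).1 \in U -> (g e1).2 \in U ->
  (g e2).1 \in W -> (g e2).2 \in W ->
  (* e is of type II *)
  e \notin [set e1; e2] ->
  ~ removable g setT setT e ->
  ~ removable g setT (setT :\ e1 :\ e2) e ->
  (* e* : an edge of G - e (and of H - e) nonadmissible in G - e and in H - e *)
  estar != e -> estar \notin [set e1; e2] ->
  ~ admissible g setT (setT :\ e) estar ->
  ~ admissible g setT (setT :\ e1 :\ e2 :\ e) estar ->
  (* B : inclusion-maximal barrier of G - e containing both ends of e* *)
  barrier g setT (setT :\ e) B ->
  (g estar).1 \in B -> (g estar).2 \in B ->
  (forall B' : {set V}, barrier g setT (setT :\ e) B' ->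
     (g estar).1 \in B' -> (g estar).2 \in B' -> B \subset B' -> B' = B) ->
  let U1 := B :&: U in
  let W2 := B :&: W in
  let U2 := [set v in U | [set v] \in components g (~: B) (setT :\ e)] in
  let W1 := [set v in W | [set v] \in components g (~: B) (setT :\ e)] in
  [/\ U1 != set0, W2 != set0, #|W1| <= #|U1| & #|U2| <= #|W2|].
Proof.
move=> [conn3 _ _] [_ _ _ [_ _ admH] _] UW e1U1 e1U2 e2W1 e2W2 _ _ _ _ estarH
  _ _ _ estar1 estar2 _ U1 W2 U2 W1.
have H_edges f : f \notin [set e1; e2] -> f \in edges g setT (setT :\ e1 :\ e2).
  by rewrite !inE negb_or andbT => /andP [-> ->].
have /andP [-> ->] :=
  bipartition_edge_meets UW (H_edges _ estarH) estar1 estar2.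
have UW0 : U :&: W = set0 by case/and3P: UW => /eqP.
have [f [_ ef ey fH]] := edge_avoiding_doubleton noloop (g e).2 conn3
  (in_setT (g e).1) UW0 e1U1 e1U2 e2W1 e2W2.
have [N [pmN fN]] := admH f (H_edges _ fH).
have eN : e \notin N.
  apply: (pm_notin pmN (in_setT _) fN ef); first by rewrite /inc eqxx.
  by apply: contraNneq ey => ->; rewrite /other_end eqxx.
have NF : N \subset setT :\ e.
  by apply/subsetP => h hN; rewrite !inE andbT; apply: contraNneq eN => <-.
split=> //.
  exact: card_singleton_components_le pmN NF (bipartition_sym UW).
exact: card_singleton_components_le pmN NF UW.
Qed.
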